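(* Under the standing assumptions, $\sum_{n\eta_2\le S\le n\eta_3}\Phi(S)=o(1)$ as $n\to\infty$, the sum being over integers $S$.
   Context: Parameters: integer $k\ge2$, constants $\alpha>0$, $r>0$, $0<p<1$; $d=n^{\alpha}$ (treated as an integer), $m=n\ln d$, $\tau=\frac1{1-p}$, $r_{cr}=\frac1{\ln\tau}$. Standing assumptions: $(2k-1)\alpha>1$, $k\alpha\le1$, $k\ge\frac{\tau\ln\tau}{\tau-1}$, and $r<r_{cr}$. Notation: $f(s)=1+\frac{p}{1-p}\cdot\frac{s^k-d^{-k}}{1-d^{-k}}$ for $s\in[0,1]$; $B(S)=\binom{n}{S}\left(\frac1d\right)^{S}\left(1-\frac1d\right)^{n-S}$; $W(S)=f(S/n)^{rm}$; $\Phi(S)=B(S)W(S)$. Let $\alpha_0=\frac{(2k-1)\alpha-1}{2(k-1)}$, and let $\eta_2,\eta_3,\mu$ be constants with $0<\eta_2<\eta_3<1$, $\alpha_0/\alpha-\mu\eta_2^{k-1}>0$, $\mu>\frac{kpr}{1-p}$, and $r\ln(1-p)+\eta_3>0$. *)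

From Stdlib Require Import Reals Lra.
From Coquelicot Require Import Coquelicot.
Open Scope R_scope.

(* d = n^alpha "treated as an integer": we take d = floor(n^alpha). *)
Definition dd (alpha : R) (n : nat) : R :=
  IZR (Int_part (Rpower (INR n) alpha)).

Definition mm (alpha : R) (n : nat) : R := INR n * ln (dd alpha n).

Definition ff (k : nat) (alpha p : R) (n : nat) (s : R) : R :=
  1 + p / (1 - p) * ((s ^ k - / (dd alpha n) ^ k) / (1 - / (dd alpha n) ^ k)).

Definition BB (alpha : R) (n S : nat) : R :=
  Binomial.C n S * (/ dd alpha n) ^ S * (1 - / dd alpha n) ^ (n - S).

Definition WW (k : nat) (alpha r p : R) (n S : nat) : R :=
  Rpower (ff k alpha p n (INR S / INR n)) (r * mm alpha n).

Definition Phi (k : nat) (alpha r p : R) (n S : nat) : R :=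
  BB alpha n S * WW k alpha r p n S.

(* sum of Phi(S) over integers S with n*eta2 <= S <= n*eta3; since
   0 < eta2 < eta3 < 1 all such S lie in 0..n *)
Definition PhiSum (k : nat) (alpha r p eta2 eta3 : R) (n : nat) : R :=
  sum_n (fun S =>
    if Rle_dec (INR n * eta2) (INR S) then
      if Rle_dec (INR S) (INR n * eta3) then Phi k alpha r p n S else 0
    else 0) n.

From Stdlib Require Import Reals Lra Lia.
From Coquelicot Require Import Coquelicot.
Open Scope R_scope.

(* Write T = 1 / (1 - p), d = floor (n^alpha) and s = S / n.  The argument is a
   uniform bound on the terms of the window followed by a crude count of them.
   - Calculus: the hypothesis k >= T ln T / (T - 1) gives 1 + (T - 1) s^k <= T^s
     for s in (0, 1] (lemma [ln_poly_le_linear]), via the monotonicity of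
     (1 + u) ln (1 + u) / u and of ln (1 + (T - 1) x^k) / x.
   - Pointwise bound: B(S) <= 2^n d^(-S) and f(s) <= 1 + (T - 1) s^k, so with
     m = n ln d,  Phi(S) <= exp (n ln 2 - S ln d (1 - r ln T))  ([Phi_le_exp]).
     Since r < r_cr the gap 1 - r ln T is positive, and on the window S >= n eta2.
   - Summation: as ln d -> +oo, eventually every term is <= e^(-2n), and the at
     most n + 1 terms sum to <= (n + 1) e^(-2n) <= e^(-n) -> 0. *)

Lemma exp_le_exp x y : x <= y -> exp x <= exp y.
Proof.
  intros [Hlt | ->]; [now left; apply exp_increasing | apply Rle_refl].
Qed.

Lemma pow_exp_ln x (n : nat) : 0 < x -> x ^ n = exp (INR n * ln x).
Proof.
  intro Hx. rewrite <- ln_pow by exact Hx. rewrite exp_ln; [reflexivity |].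
  now apply pow_lt.
Qed.

Lemma ln_1p_le x : 0 <= x -> ln (1 + x) <= x.
Proof.
  intro Hx. rewrite <- (ln_exp x) at 2.
  apply ln_le; [lra | apply exp_ineq1_le].
Qed.

Lemma nondecreasing_of_derive_nonneg (g g' : R -> R) (a b : R) :
  a <= b ->
  (forall x, a <= x <= b -> is_derive g x (g' x)) ->
  (forall x, a < x < b -> 0 <= g' x) ->
  g a <= g b.
Proof.
  intros [Hab | <-] Hder Hpos; [|lra].
  destruct (MVT_cor2 g g' a b Hab) as [c [Hmvt Hc]].
  { intros c Hc. apply is_derive_Reals, Hder, Hc. }
  assert (0 <= g' c * (b - a)) by (apply Rmult_le_pos; [apply Hpos, Hc | lra]).
  lra.
Qed.

(* [u |-> (1 + u) ln (1 + u) / u] is nondecreasing on [(0, +oo)]: its derivative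
   is [(u - ln (1 + u)) / u^2 >= 0]. *)
Lemma xlnx_ratio_nondecr u U : 0 < u -> u <= U ->
  (1 + u) * ln (1 + u) / u <= (1 + U) * ln (1 + U) / U.
Proof.
  intros Hu HuU.
  apply (nondecreasing_of_derive_nonneg
           (fun x => (1 + x) * ln (1 + x) / x) (fun x => (x - ln (1 + x)) / x ^ 2));
    [exact HuU | |].
  - intros x Hx. auto_derive; [lra |]. field. lra.
  - intros x Hx. apply Rdiv_le_0_compat; [| apply pow_lt; lra].
    pose proof (ln_1p_le x). lra.
Qed.

(* Consequently, if [kappa >= T ln T / (T - 1)], the ratio above is at most [kappa]
   on [(0, T - 1]]; this is the form in which the hypothesis on [k] is used. *)
Lemma ln_1p_le_ratio T kappa u : 1 < T -> kappa >= T * ln T / (T - 1) ->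
  0 < u -> u <= T - 1 -> ln (1 + u) <= kappa * u / (1 + u).
Proof.
  intros HT Hkappa Hu HuT.
  pose proof (xlnx_ratio_nondecr u (T - 1) Hu HuT) as Hq.
  replace (1 + (T - 1)) with T in Hq by ring.
  assert (Hratio : (1 + u) * ln (1 + u) / u <= kappa) by lra.
  apply Rmult_le_reg_r with (r := 1 + u); [lra |].
  apply Rmult_le_reg_r with (r := / u); [now apply Rinv_0_lt_compat |].
  replace (kappa * u / (1 + u) * (1 + u) * / u) with kappa by (field; lra).
  replace (ln (1 + u) * (1 + u) * / u) with ((1 + u) * ln (1 + u) / u) by (field; lra).
  exact Hratio.
Qed.

(* Key inequality: [1 + (T - 1) s^k <= T^s] for [s] in [(0, 1]], in logarithmic
   form.  The ratio [ln (1 + (T - 1) x^k) / x] is nondecreasing on [(0, 1]], since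
   with [u = (T - 1) x^k] its derivative has the sign of [k u / (1 + u) - ln (1 + u)];
   comparing its values at [s] and [1] gives the claim. *)
Lemma ln_poly_le_linear T (k : nat) s : 1 < T -> (1 <= k)%nat ->
  INR k >= T * ln T / (T - 1) -> 0 < s -> s <= 1 ->
  ln (1 + (T - 1) * s ^ k) <= s * ln T.
Proof.
  intros HT Hk Hkappa Hs Hs1.
  set (u x := (T - 1) * x ^ k).
  assert (Hu : forall x, 0 < x <= 1 -> 0 < u x <= T - 1).
  { intros x Hx. unfold u. split; [apply Rmult_lt_0_compat; [lra | apply pow_lt; lra] |].
    rewrite <- (Rmult_1_r (T - 1)) at 2. apply Rmult_le_compat_l; [lra |].
    rewrite <- (pow1 k). apply pow_incr. lra. }
  assert (Hratio : ln (1 + u s) / s <= ln (1 + u 1) / 1).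
  { apply (nondecreasing_of_derive_nonneg (fun x => ln (1 + u x) / x)
      (fun x => (INR k * u x / (1 + u x) - ln (1 + u x)) / x ^ 2)); [exact Hs1 | |].
    - intros x Hx. destruct (Hu x ltac:(lra)) as [Hux _].
      assert (Hpow : x ^ k = x ^ Nat.pred k * x).
      { rewrite Rmult_comm, tech_pow_Rmult. f_equal. lia. }
      unfold u in *. auto_derive; [lra |].
      rewrite Hpow in *. field. lra.
    - intros x Hx. apply Rdiv_le_0_compat; [| apply pow_lt; lra].
      destruct (Hu x ltac:(lra)).
      pose proof (ln_1p_le_ratio T (INR k) (u x) HT Hkappa ltac:(lra) ltac:(lra)). lra. }
  replace (u 1) with (T - 1) in Hratio by (unfold u; rewrite pow1; ring).
  replace (1 + (T - 1)) with T in Hratio by ring.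
  apply Rmult_le_reg_r with (r := / s); [now apply Rinv_0_lt_compat |].
  replace (s * ln T * / s) with (ln T / 1) by (field; lra).
  exact Hratio.
Qed.

Lemma sum_f_R0_term_le (f : nat -> R) (i N : nat) :
  (forall j, 0 <= f j) -> (i <= N)%nat -> f i <= sum_f_R0 f N.
Proof.
  intros Hf Hi. induction N as [| N IH]; simpl.
  - replace i with 0%nat by lia. lra.
  - destruct (Nat.eq_dec i (S N)) as [-> | Hne].
    + pose proof (cond_pos_sum f N Hf). lra.
    + pose proof (Hf (S N)). specialize (IH ltac:(lia)). lra.
Qed.

Lemma binomial_nonneg n i : 0 <= Binomial.C n i.
Proof.
  unfold Binomial.C. apply Rlt_le, Rdiv_lt_0_compat; [apply INR_fact_lt_0 |].
  apply Rmult_lt_0_compat; apply INR_fact_lt_0.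
Qed.

(* [C(n, i) <= 2^n], one term of the binomial expansion of [(1 + 1)^n]. *)
Lemma binomial_le_pow2 n i : (i <= n)%nat -> Binomial.C n i <= 2 ^ n.
Proof.
  intro Hi. replace 2 with (1 + 1) by ring. rewrite binomial.
  eapply Rle_trans;
    [| apply (sum_f_R0_term_le (fun j => Binomial.C n j * 1 ^ j * 1 ^ (n - j)) i n); [| exact Hi]].
  - rewrite !pow1. lra.
  - intro j. rewrite !pow1. pose proof (binomial_nonneg n j). lra.
Qed.

Lemma BB_bounds alpha n S : 1 < dd alpha n -> (S <= n)%nat ->
  0 <= BB alpha n S <= 2 ^ n * (/ dd alpha n) ^ S.
Proof.
  intros Hd HS. unfold BB. set (d := dd alpha n) in *.
  assert (Hinv : 0 < / d < 1).
  { split; [apply Rinv_0_lt_compat; lra |]. rewrite <- Rinv_1. apply Rinv_lt_contravar; lra. }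
  assert (Hq : 0 <= (1 - / d) ^ (n - S) <= 1).
  { split; [apply pow_le; lra |].
    apply Rle_trans with (1 ^ (n - S)); [apply pow_incr; lra | rewrite pow1; lra]. }
  assert (HdS : 0 <= (/ d) ^ S) by (apply pow_le; lra).
  pose proof (binomial_le_pow2 n S HS). pose proof (binomial_nonneg n S).
  assert (0 <= Binomial.C n S * (/ d) ^ S) by (apply Rmult_le_pos; lra).
  assert (Binomial.C n S * (/ d) ^ S <= 2 ^ n * (/ d) ^ S) by (apply Rmult_le_compat_r; lra).
  assert (Binomial.C n S * (/ d) ^ S * (1 - / d) ^ (n - S) <= Binomial.C n S * (/ d) ^ S * 1)
    by (apply Rmult_le_compat_l; lra).
  split; [apply Rmult_le_pos; lra | lra].
Qed.

Lemma T_gt_1 p : 0 < p < 1 -> 1 < / (1 - p).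
Proof. intro Hp. rewrite <- Rinv_1. apply Rinv_lt_contravar; lra. Qed.

(* For [d^(-1) <= s <= 1] the normalised fraction [(s^k - d^(-k)) / (1 - d^(-k))]
   lies in [[0, s^k]], hence [1 <= f(s) <= 1 + (T - 1) s^k] with [T = 1 / (1 - p)]. *)
Lemma ff_bounds k alpha p n s : 0 < p < 1 -> (1 <= k)%nat -> 1 < dd alpha n ->
  / dd alpha n <= s <= 1 ->
  1 <= ff k alpha p n s <= 1 + (/ (1 - p) - 1) * s ^ k.
Proof.
  intros Hp Hk Hd Hs. unfold ff. set (d := dd alpha n) in *.
  set (e := / d ^ k).
  assert (He : 0 < e < 1).
  { assert (1 < d ^ k) by (apply Rlt_pow_R1; [lra | lia]).
    unfold e. split; [apply Rinv_0_lt_compat; lra |].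
    rewrite <- Rinv_1. apply Rinv_lt_contravar; lra. }
  assert (Hsk : e <= s ^ k <= 1).
  { assert (0 < / d) by (apply Rinv_0_lt_compat; lra).
    unfold e. rewrite <- pow_inv, <- (pow1 k).
    split; apply pow_incr; lra. }
  assert (HX : 0 <= (s ^ k - e) / (1 - e) <= s ^ k).
  { split; [apply Rdiv_le_0_compat; lra |].
    apply Rmult_le_reg_r with (r := 1 - e); [lra |].
    unfold Rdiv. rewrite Rmult_assoc, Rinv_l; nra. }
  replace (p / (1 - p)) with (/ (1 - p) - 1) by (field; lra).
  assert (0 < / (1 - p) - 1).
  { pose proof (T_gt_1 p Hp). lra. }
  nra.
Qed.

Lemma below_critical_rate r T : 1 < T -> 0 < r -> r < / ln T -> 0 < 1 - r * ln T.
Proof.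
  intros HT Hr HrT.
  assert (HlnT : 0 < ln T) by (rewrite <- ln_1; apply ln_increasing; lra).
  apply (Rmult_lt_compat_r (ln T)) in HrT; [| exact HlnT].
  rewrite Rinv_l in HrT; lra.
Qed.

(* Pointwise estimate: [Phi(S) <= 2^n d^(-S) T^(r S ln d)]
   [= exp (n ln 2 - S ln d (1 - r ln T))], combining the bounds on [B] and [f]
   with the key inequality at [s = S / n]. *)
Lemma Phi_le_exp k alpha r p n S : (1 <= k)%nat -> 0 < r -> 0 < p < 1 ->
  INR k >= / (1 - p) * ln (/ (1 - p)) / (/ (1 - p) - 1) ->
  1 < dd alpha n -> (0 < n)%nat -> (S <= n)%nat -> / dd alpha n <= INR S / INR n ->
  0 <= Phi k alpha r p n S <=
  exp (INR n * ln 2 - INR S * ln (dd alpha n) * (1 - r * ln (/ (1 - p)))).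
Proof.
  intros Hk Hr Hp HkT Hd Hn HSn Hs.
  set (T := / (1 - p)) in *. set (d := dd alpha n) in *. set (s := INR S / INR n) in *.
  pose proof (T_gt_1 p Hp) as HT.
  assert (Hn0 : 0 < INR n) by (now apply lt_0_INR).
  assert (Hlnd : 0 < ln d) by (rewrite <- ln_1; apply ln_increasing; lra).
  assert (Hs0 : 0 < s) by (pose proof (Rinv_0_lt_compat d ltac:(lra)); lra).
  assert (Hs1 : s <= 1).
  { unfold s. apply Rmult_le_reg_r with (r := INR n); [exact Hn0 |].
    unfold Rdiv. rewrite Rmult_assoc, Rinv_l, Rmult_1_l, Rmult_1_r by lra.
    now apply le_INR. }
  destruct (BB_bounds alpha n S Hd HSn) as [HB0 HB].
  destruct (ff_bounds k alpha p n s Hp Hk Hd (conj Hs Hs1)) as [Hf1 Hf].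
  assert (Hlnf : ln (ff k alpha p n s) <= s * ln T).
  { eapply Rle_trans; [apply ln_le; [lra | exact Hf] |].
    now apply ln_poly_le_linear. }
  assert (HW : WW k alpha r p n S <= exp (INR S * (r * ln d * ln T))).
  { unfold WW, Rpower, mm. fold d. fold s. apply exp_le_exp.
    replace (INR S * (r * ln d * ln T)) with (r * (INR n * ln d) * (s * ln T))
      by (unfold s; field; lra).
    apply Rmult_le_compat_l; [| exact Hlnf].
    apply Rmult_le_pos; [lra | apply Rmult_le_pos; lra]. }
  assert (HW0 : 0 <= WW k alpha r p n S) by (left; apply exp_pos).
  assert (HB_exp : 2 ^ n * (/ d) ^ S = exp (INR n * ln 2 - INR S * ln d)).
  { rewrite (pow_exp_ln 2), (pow_exp_ln (/ d)), ln_Rinv by (try apply Rinv_0_lt_compat; lra).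
    rewrite <- exp_plus. f_equal. ring. }
  fold d in HB. rewrite HB_exp in HB.
  unfold Phi. split; [now apply Rmult_le_pos |].
  eapply Rle_trans; [apply Rmult_le_compat; [exact HB0 | exact HW0 | exact HB | exact HW] |].
  rewrite <- exp_plus. apply Req_le. f_equal. ring.
Qed.

Lemma Phi_window_le k alpha r p eta2 eta3 n S : (1 <= k)%nat -> 0 < r -> 0 < p < 1 ->
  INR k >= / (1 - p) * ln (/ (1 - p)) / (/ (1 - p) - 1) ->
  r < / ln (/ (1 - p)) -> 0 < eta2 -> eta3 < 1 ->
  (0 < n)%nat -> 1 < dd alpha n -> / dd alpha n <= eta2 ->
  INR n * eta2 <= INR S <= INR n * eta3 ->
  0 <= Phi k alpha r p n S <=
  exp (INR n * (ln 2 - eta2 * (1 - r * ln (/ (1 - p))) * ln (dd alpha n))).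
Proof.
  intros Hk Hr Hp HkT HrT He2 He3 Hn Hd Hde [HS2 HS3].
  set (T := / (1 - p)) in *. set (d := dd alpha n) in *.
  pose proof (T_gt_1 p Hp) as HT.
  pose proof (below_critical_rate r T HT Hr HrT) as Hgap.
  assert (Hn0 : 0 < INR n) by (now apply lt_0_INR).
  assert (HSn : (S <= n)%nat) by (apply INR_le; nra).
  assert (Hs : / d <= INR S / INR n).
  { apply Rle_trans with eta2; [exact Hde |].
    apply Rmult_le_reg_r with (r := INR n); [exact Hn0 |].
    unfold Rdiv. rewrite Rmult_assoc, Rinv_l by lra. lra. }
  destruct (Phi_le_exp k alpha r p n S Hk Hr Hp HkT Hd Hn HSn Hs) as [HPhi0 HPhi1].
  split; [exact HPhi0 |]. eapply Rle_trans; [exact HPhi1 |]. apply exp_le_exp. fold d T.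
  assert (Hlnd : 0 < ln d) by (rewrite <- ln_1; apply ln_increasing; lra).
  assert (0 <= ln d * (1 - r * ln T)) by (apply Rmult_le_pos; lra).
  nra.
Qed.

Lemma sum_n_le_const (g : nat -> R) (eps : R) (n : nat) :
  (forall S, 0 <= g S <= eps) -> 0 <= sum_n g n <= INR (S n) * eps.
Proof.
  intro Hg. unfold sum_n. split.
  - eapply Rle_trans; [| apply sum_n_m_le; intro S; apply (Hg S)].
    rewrite sum_n_m_const. lra.
  - eapply Rle_trans; [apply sum_n_m_le; intro S; apply (Hg S) |].
    rewrite sum_n_m_const, Nat.sub_0_r. lra.
Qed.

(* [(x + 1) e^(-2x) <= e^(-x)], from [1 + x <= e^x]. *)
Lemma linear_times_exp_le (x : R) : (x + 1) * exp (- (2 * x)) <= exp (- x).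
Proof.
  replace (exp (- x)) with (exp x * exp (- (2 * x))) by (rewrite <- exp_plus; f_equal; ring).
  apply Rmult_le_compat_r; [left; apply exp_pos |].
  pose proof (exp_ineq1_le x). lra.
Qed.

(* Finite-[n] estimate: once [d] is so large that [eta2 (1 - r ln T) ln d >= ln 2 + 2],
   every term of the window sum is at most [e^(-2n)], so the sum is at most [e^(-n)]. *)
Lemma PhiSum_le_exp k alpha r p eta2 eta3 n : (1 <= k)%nat -> 0 < r -> 0 < p < 1 ->
  INR k >= / (1 - p) * ln (/ (1 - p)) / (/ (1 - p) - 1) ->
  r < / ln (/ (1 - p)) -> 0 < eta2 -> eta3 < 1 ->
  (0 < n)%nat -> 1 < dd alpha n -> / dd alpha n <= eta2 ->
  ln 2 + 2 <= eta2 * (1 - r * ln (/ (1 - p))) * ln (dd alpha n) ->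
  0 <= PhiSum k alpha r p eta2 eta3 n <= exp (- INR n).
Proof.
  intros Hk Hr Hp HkT HrT He2 He3 Hn Hd Hde Hlarge.
  assert (Hterm : forall S, 0 <= (if Rle_dec (INR n * eta2) (INR S) then
      if Rle_dec (INR S) (INR n * eta3) then Phi k alpha r p n S else 0 else 0)
      <= exp (- (2 * INR n))).
  { intro S. pose proof (exp_pos (- (2 * INR n))).
    destruct (Rle_dec (INR n * eta2) (INR S)) as [H2 |]; [| lra].
    destruct (Rle_dec (INR S) (INR n * eta3)) as [H3 |]; [| lra].
    destruct (Phi_window_le k alpha r p eta2 eta3 n S Hk Hr Hp HkT HrT He2 He3 Hn Hd Hde
      (conj H2 H3)) as [HPhi0 HPhi1].
    split; [exact HPhi0 |]. eapply Rle_trans; [exact HPhi1 |]. apply exp_le_exp.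
    pose proof (pos_INR n). nra. }
  destruct (sum_n_le_const _ _ n Hterm) as [Hlo Hhi].
  unfold PhiSum. split; [exact Hlo |].
  rewrite S_INR in Hhi. eapply Rle_trans; [exact Hhi | apply linear_times_exp_le].
Qed.

Lemma dd_eventually_ge alpha M : 0 < alpha ->
  exists N, forall n, (N <= n)%nat -> M <= dd alpha n.
Proof.
  intro Ha. set (M1 := Rabs M + 1).
  assert (HM1 : 0 < M1) by (unfold M1; pose proof (Rabs_pos M); lra).
  destruct (INR_unbounded (Rpower M1 (/ alpha))) as [N HN].
  exists N. intros n Hn.
  assert (HnN : Rpower M1 (/ alpha) <= INR n) by (apply le_INR in Hn; lra).
  assert (HR : M1 <= Rpower (INR n) alpha).
  { replace M1 with (Rpower (Rpower M1 (/ alpha)) alpha)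
      by (rewrite Rpower_mult, Rinv_l, Rpower_1 by lra; reflexivity).
    apply Rle_Rpower_l; [lra | split; [apply exp_pos | exact HnN]]. }
  unfold dd. pose proof (base_Int_part (Rpower (INR n) alpha)).
  pose proof (Rle_abs M). unfold M1 in HR. lra.
Qed.

Lemma dd_eventually_large alpha eta2 c : 0 < alpha -> 0 < eta2 -> 0 < c ->
  exists N, forall n, (N <= n)%nat ->
    1 < dd alpha n /\ / dd alpha n <= eta2 /\ ln 2 + 2 <= c * ln (dd alpha n).
Proof.
  intros Ha He2 Hc.
  destruct (dd_eventually_ge alpha (Rmax (Rmax 2 (/ eta2)) (exp ((ln 2 + 2) / c))) Ha)
    as [N HN].
  exists N. intros n Hn. specialize (HN n Hn).
  pose proof (Rmax_l (Rmax 2 (/ eta2)) (exp ((ln 2 + 2) / c))).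
  pose proof (Rmax_r (Rmax 2 (/ eta2)) (exp ((ln 2 + 2) / c))).
  pose proof (Rmax_l 2 (/ eta2)). pose proof (Rmax_r 2 (/ eta2)).
  split; [lra | split].
  - rewrite <- (Rinv_inv eta2). apply Rinv_le_contravar; [apply Rinv_0_lt_compat |]; lra.
  - assert (Hl : (ln 2 + 2) / c <= ln (dd alpha n)).
    { rewrite <- (ln_exp ((ln 2 + 2) / c)). apply ln_le; [apply exp_pos | lra]. }
    apply (Rmult_le_compat_l c) in Hl; [| lra].
    replace (c * ((ln 2 + 2) / c)) with (ln 2 + 2) in Hl by (field; lra). exact Hl.
Qed.

(* [e^(-n) -> 0], a geometric sequence of ratio [e^(-1) < 1]. *)
Lemma is_lim_seq_exp_neg : is_lim_seq (fun n => exp (- INR n)) 0.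
Proof.
  apply is_lim_seq_ext with (u := fun n => exp (-1) ^ n).
  - intro n. rewrite pow_exp_ln by apply exp_pos. rewrite ln_exp. f_equal. ring.
  - apply is_lim_seq_geom. rewrite Rabs_pos_eq by (left; apply exp_pos).
    rewrite <- exp_0. apply exp_increasing. lra.
Qed.

Theorem lemma4p9 (k : nat) (alpha r p eta2 eta3 mu : R) :
  (2 <= k)%nat ->
  0 < alpha -> 0 < r -> 0 < p -> p < 1 ->
  (2 * INR k - 1) * alpha > 1 ->
  INR k * alpha <= 1 ->
  INR k >= (/ (1 - p)) * ln (/ (1 - p)) / (/ (1 - p) - 1) ->
  r < / ln (/ (1 - p)) ->
  0 < eta2 -> eta2 < eta3 -> eta3 < 1 ->
  ((2 * INR k - 1) * alpha - 1) / (2 * (INR k - 1)) / alpha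
    - mu * eta2 ^ (k - 1) > 0 ->
  mu > INR k * p * r / (1 - p) ->
  r * ln (1 - p) + eta3 > 0 ->
  is_lim_seq (fun n => PhiSum k alpha r p eta2 eta3 n) 0.
Proof.
  intros Hk Ha Hr Hp0 Hp1 _ _ HkT HrT He2 _ He3 _ _ _.
  pose proof (T_gt_1 p (conj Hp0 Hp1)) as HT.
  assert (Hc : 0 < eta2 * (1 - r * ln (/ (1 - p))))
    by (apply Rmult_lt_0_compat; [| apply below_critical_rate]; assumption).
  destruct (dd_eventually_large alpha eta2 _ Ha He2 Hc) as [N HN].
  apply is_lim_seq_le_le_loc with (u := fun _ => 0) (w := fun n => exp (- INR n));
    [| apply is_lim_seq_const | apply is_lim_seq_exp_neg].
  exists (max N 1). intros n Hn.
  destruct (HN n ltac:(lia)) as [Hd [Hde Hlarge]].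
  exact (PhiSum_le_exp k alpha r p eta2 eta3 n ltac:(lia) Hr (conj Hp0 Hp1) HkT HrT He2 He3
    ltac:(lia) Hd Hde Hlarge).
Qed.
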